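(* Fix a sample $(x,u)$, generative parameters $\theta$, inference parameters $\phi$ and $\epsilon>0$. Suppose there is a function $g:\mathbb{R}^{d_Z}\to\mathbb{R}$ with $\mathrm{SNR}(g)\ge 1/\epsilon$. Then for every $\alpha\in[0,1]$, $$\mathrm{ELBO}_{\theta,\phi}(\alpha;x,u)-\mathrm{ELBO}_{\theta,\phi}(0;x,u)\ \ge\ \mathrm{LB}(\alpha,\epsilon,\Delta_{1-0}(x,u)),$$ where $\mathrm{LB}(\alpha,\epsilon,\Delta):=\alpha\Delta+\alpha\int_{\alpha}^{1}\frac{1-t}{t(1-t)+\epsilon}\,dt+(1-\alpha)\int_{0}^{\alpha}\frac{t}{t(1-t)+\epsilon}\,dt$.
   Context: Observations $x\in\mathbb{R}^{d_X}$, covariates $u\in\mathbb{R}^{d_U}$, latents $z\in\mathbb{R}^{d_Z}$, $d_Z<d_X$. Generative parameters $\theta=(f,T,\lambda)$: mixing function $f$, label prior density $p_{T,\lambda}(z|u)=\prod_{i=1}^{d_Z}\exp(\lambda_i(u)\cdot T_i(z_i)-A(u)+B(z_i))$, decoder density $p_f(x|z)=p_\epsilon(x-f(z))$ for a fixed noise density $p_\epsilon$. Inference parameters $\phi$ determine an encoder density $q_\phi(z|x)$ and posterior density $q_\phi(z|x,u)$. For $\alpha\in[0,1]$, with $m_\alpha=\alpha q_\phi(\cdot|x)+(1-\alpha)q_\phi(\cdot|x,u)$, $\mathrm{ELBO}_{\theta,\phi}(\alpha;x,u)=\mathbb{E}_{z\sim m_\alpha}\log p_f(x|z)-\mathcal{D}_{\mathrm{KL}}(m_\alpha\|p_{T,\lambda}(\cdot|u))$,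 and $\Delta_{1-0}(x,u):=\mathrm{ELBO}_{\theta,\phi}(1;x,u)-\mathrm{ELBO}_{\theta,\phi}(0;x,u)$. The signal-to-noise ratio of $g$ is $$\mathrm{SNR}(g)=\frac{\big(\mathbb{E}_{q_\phi(z|x)}g(z)-\mathbb{E}_{q_\phi(z|x,u)}g(z)\big)^2}{\max\big(\mathrm{Var}_{q_\phi(z|x)}g(z),\ \mathrm{Var}_{q_\phi(z|x,u)}g(z)\big)}.$$ All expectations, variances and divergences appearing are assumed finite. *)

From HB Require Import structures.
From mathcomp Require Import all_boot all_order all_algebra.
From mathcomp Require Import all_classical all_reals all_analysis.
Set Implicit Arguments. Unset Strict Implicit. Unset Printing Implicit Defensive.
Import Order.TTheory GRing.Theory Num.Theory.
Import numFieldNormedType.Exports.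
Local Open Scope classical_set_scope.
Local Open Scope ring_scope.

(* Points of R^n are represented as n-tuples of reals, which carry the
   product (= Borel) sigma-algebra [measure_tuple_display]. *)

Section Defs.
Variable R : realType.

(* Lebesgue measure on R^n, characterised by its values on boxes
   (a_1,b_1] x ... x (a_n,b_n]; this determines it uniquely on the
   product sigma-algebra. *)
Definition is_lebesgue_measure (n : nat)
  (mu : {measure set (n.-tuple R) -> \bar R}) : Prop :=
  forall a b : 'I_n -> R, (forall i, a i <= b i) ->
    mu [set t | forall i, a i < tnth t i <= b i] = (\prod_(i < n) (b i - a i))%:E.

Definition is_density (n : nat) (mu : {measure set (n.-tuple R) -> \bar R})
  (p : n.-tuple R -> R) : Prop :=
  [/\ measurable_fun setT p, (forall t, 0 <= p t) &
      (\int[mu]_(t in setT) (p t)%:E = 1)%E].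

Definition tsub (n : nat) (x y : n.-tuple R) : n.-tuple R :=
  [tuple tnth x i - tnth y i | i < n].

Definition prior (dZ dU k : nat) (T : 'I_dZ -> R -> 'rV[R]_k)
  (lam : 'I_dZ -> dU.-tuple R -> 'rV[R]_k) (A : dU.-tuple R -> R) (B : R -> R)
  (u : dU.-tuple R) (z : dZ.-tuple R) : R :=
  \prod_(i < dZ) expR ((\sum_(j < k) lam i u 0 j * T i (tnth z i) 0 j)
                        - A u + B (tnth z i)).

Definition decoder (dX dZ : nat) (peps : dX.-tuple R -> R)
  (f : dZ.-tuple R -> dX.-tuple R) (x : dX.-tuple R) (z : dZ.-tuple R) : R :=
  peps (tsub x (f z)).

Definition mixture (n : nat) (alpha : R) (q1 q0 : n.-tuple R -> R)
  (z : n.-tuple R) : R := alpha * q1 z + (1 - alpha) * q0 z.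

Definition expect (n : nat) (mu : {measure set (n.-tuple R) -> \bar R})
  (q : n.-tuple R -> R) (h : n.-tuple R -> R) : R :=
  Rintegral mu setT (fun z => q z * h z).

Definition variance (n : nat) (mu : {measure set (n.-tuple R) -> \bar R})
  (q : n.-tuple R -> R) (h : n.-tuple R -> R) : R :=
  expect mu q (fun z => (h z - expect mu q h) ^+ 2).

(* KL(m || p) = int m log (m/p)  (with 0 log 0 = 0) *)
Definition KL (n : nat) (mu : {measure set (n.-tuple R) -> \bar R})
  (m p : n.-tuple R -> R) : R :=
  Rintegral mu setT (fun z => m z * ln (m z / p z)).

(* ELBO(alpha; x, u) = E_{m_alpha} log p_f(x|z) - KL(m_alpha || p(.|u)),
   with q1 = q_phi(.|x), q0 = q_phi(.|x,u), pz = p_{T,lambda}(.|u),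
   pxz = p_f(x|.). *)
Definition ELBO (n : nat) (mu : {measure set (n.-tuple R) -> \bar R})
  (pxz pz q1 q0 : n.-tuple R -> R) (alpha : R) : R :=
  expect mu (mixture alpha q1 q0) (fun z => ln (pxz z))
  - KL mu (mixture alpha q1 q0) pz.

(* signal-to-noise ratio, valued in extended reals: a ratio c/0 with c > 0
   is +oo; the undefined 0/0 is set to 0. *)
Definition SNR (n : nat) (mu : {measure set (n.-tuple R) -> \bar R})
  (q1 q0 : n.-tuple R -> R) (g : n.-tuple R -> R) : \bar R :=
  let num := (expect mu q1 g - expect mu q0 g) ^+ 2 in
  let den := Num.max (variance mu q1 g) (variance mu q0 g) in
  if den == 0 then (if num == 0 then 0%E else +oo%E) else (num / den)%:E.

Definition LB (alpha eps Delta : R) : R :=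
  alpha * Delta
  + alpha * Rintegral lebesgue_measure `[alpha, 1]
              (fun t => (1 - t) / (t * (1 - t) + eps))
  + (1 - alpha) * Rintegral lebesgue_measure `[0, alpha]
              (fun t => t / (t * (1 - t) + eps)).

End Defs.

From Pilot Require Import Defs.
From HB Require Import structures.
From mathcomp Require Import all_boot all_order all_algebra.
From mathcomp Require Import all_classical all_reals all_analysis.
From mathcomp Require Import measurable_realfun ring lra.
Import Order.TTheory GRing.Theory Num.Theory.
Import numFieldNormedType.Exports.
Local Open Scope classical_set_scope.
Local Open Scope ring_scope.

(** Write [m_t = t q1 + (1 - t) q0] for the mixture of encoder and posterior.
    Along [m_t] the ELBO is affine in [t] up to the entropy term
    [- \int m_t ln m_t], so [ELBO a - ELBO 0 - a (ELBO 1 - ELBO 0)] is the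
    integrated Jensen gap [(1 - a) q0 ln q0 + a q1 ln q1 - m_a ln m_a] of the
    convex function [x ln x].  Pointwise, this gap is
    [\int_0^1 G(a,t) (q1 - q0)^2 / m_t dt] with [G] the Green function of
    [d^2/dt^2] on [[0, 1]].  Completing the square,
    [(q1 - q0)^2 / m_t >= 2 l (q1 - q0) (g - c) - l^2 m_t (g - c)^2] for all
    [l] and [c]; for [c = E_{m_t} g] the [z]-integral of the right-hand side is
    [2 l D - l^2 (t (1 - t) D^2 + t Var_1 g + (1 - t) Var_0 g)] with
    [D = E_1 g - E_0 g].  The SNR hypothesis gives [Var_i g <= eps D^2], and
    [l = 1 / ((t (1 - t) + eps) D)] makes this at least [1 / (t (1 - t) + eps)];
    integrating against [G(a, .)] yields [LB].  The right-hand side is a finite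
    sum of products [f(z) h(t)], so the two integrations commute by linearity. *)

Set Implicit Arguments. Unset Strict Implicit. Unset Printing Implicit Defensive.

Ltac continuous_arith := repeat (
  try match goal with |- {for ?t, continuous ?F} => change (continuous_at t F) end;
  lazymatch goal with
  | |- continuous_at _ (fun x => @?A x + @?B x) => apply: (continuousD (f := A) (g := B))
  | |- continuous_at _ (fun x => @?A x - @?B x) => apply: (continuousB (f := A) (g := B))
  | |- continuous_at _ (fun x => @?A x * @?B x) => apply: (continuousM (s := A) (t := B))
  | |- continuous_at _ (fun x => - @?A x) => apply: (continuousN (f := A))
  | |- continuous_at ?t (fun x => @?A x ^+ 2) => change (continuous_at t (fun x => A x * A x))
  | |- continuous_at _ (fun x => x) => exact: cvg_id
  | |- continuous_at _ _ => first [exact: cvg_cst | assumption]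
  end).

Section mixing.
Variable R : realType.
Implicit Types p q t l d e m : R.

Definition mixr p q t := t * p + (1 - t) * q.

Definition xlnx (x : R) := x * ln x.

Definition xlnx_gap p q a := (1 - a) * xlnx q + a * xlnx p - xlnx (mixr p q a).

Lemma mixr0 p q : mixr p q 0 = q.
Proof. by rewrite /mixr mul0r subr0 mul1r add0r. Qed.

Lemma mixr1 p q : mixr p q 1 = p.
Proof. by rewrite /mixr mul1r subrr mul0r addr0. Qed.

Lemma mixr_ge0 p q t : 0 <= p -> 0 <= q -> 0 <= t <= 1 -> 0 <= mixr p q t.
Proof. by move=> p0 q0 /andP[t0 t1]; rewrite addr_ge0 ?mulr_ge0 ?subr_ge0. Qed.

Lemma mixr_gt0 p q t : 0 <= p -> 0 < q -> 0 <= t < 1 -> 0 < mixr p q t.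
Proof.
move=> p0 q0 /andP[t0 t1]; rewrite ltr_wpDl ?mulr_ge0 // mulr_gt0 //.
by rewrite subr_gt0.
Qed.

Lemma mixr_eq0 p q t : 0 <= p -> 0 <= q -> 0 < t < 1 -> mixr p q t = 0 -> p = q.
Proof.
move=> p0 q0 /andP[t0 t1] /eqP.
rewrite paddr_eq0 ?mulr_ge0 ?subr_ge0 ?(ltW t0) ?(ltW t1) //.
by rewrite !mulf_eq0 (gt_eqF t0) subr_eq0 (gt_eqF t1) /= => /andP[/eqP-> /eqP->].
Qed.

Lemma mixr1B p q t : mixr p q (1 - t) = mixr q p t.
Proof. by rewrite /mixr; ring. Qed.

(* [(d - l m e)^2 >= 0] *)
Lemma quad_le_sqr_div l d e m : 0 <= m -> (m = 0 -> d = 0) ->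
  2 * l * d * e - l ^+ 2 * m * e ^+ 2 <= d ^+ 2 / m.
Proof.
rewrite le_eqVlt => /predU1P[<- /(_ erefl)->|m0 _]; first by rewrite !(mul0r, mulr0, subrr, expr0n).
rewrite ler_pdivlMr // -subr_ge0.
have -> : d ^+ 2 - (2 * l * d * e - l ^+ 2 * m * e ^+ 2) * m = (d - l * m * e) ^+ 2 by ring.
exact: sqr_ge0.
Qed.

Lemma tangent_snr_bound (eps D V1 V0 t : R) : 0 < eps -> D != 0 ->
  V1 <= eps * D ^+ 2 -> V0 <= eps * D ^+ 2 -> 0 <= t <= 1 ->
  (t * (1 - t) + eps)^-1 <= 2 * ((t * (1 - t) + eps)^-1 / D) * D
    - ((t * (1 - t) + eps)^-1 / D) ^+ 2 * (t * (1 - t) * D ^+ 2 + t * V1 + (1 - t) * V0).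
Proof.
move=> eps0 D0 V1le V0le /andP[t0 t1].
set W := t * (1 - t) + eps; set l := W^-1 / D.
have W0 : 0 < W by rewrite ltr_wpDl // mulr_ge0 // subr_ge0.
have -> : 2 * l * D - l ^+ 2 * (t * (1 - t) * D ^+ 2 + t * V1 + (1 - t) * V0) =
    W^-1 + (t * (eps * D ^+ 2 - V1) + (1 - t) * (eps * D ^+ 2 - V0)) / (W ^+ 2 * D ^+ 2).
  by rewrite /l /W; field; rewrite D0 -/W gt_eqF.
rewrite lerDl divr_ge0 ?(mulr_ge0 (sqr_ge0 W) (sqr_ge0 D)) //.
by rewrite addr_ge0 // mulr_ge0 ?subr_ge0.
Qed.

(* coefficients of [Y |-> 2 s l (Y + e) - l^2 w (Y + e)^2] in the monomials [Y^j] *)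
Definition quad_coef (s w l e : R) (j : nat) : R :=
  [:: 2 * s * l * e - l ^+ 2 * w * e ^+ 2; 2 * s * l - 2 * l ^+ 2 * w * e; - (l ^+ 2 * w)]`_j.

Lemma continuous_quad_coef (s w l e : R -> R) j t :
  {for t, continuous s} -> {for t, continuous w} -> {for t, continuous l} ->
  {for t, continuous e} -> {for t, continuous (fun x => quad_coef (s x) (w x) (l x) (e x) j)}.
Proof.
by move=> cs cw cl ce; case: j => [|[|[|j]]]; rewrite /quad_coef /=; continuous_arith.
Qed.

Lemma mixtureE n (s : R) (q1 q0 : n.-tuple R -> R) z : mixture s q1 q0 z = mixr (q1 z) (q0 z) s.
Proof. by []. Qed.

Lemma mul_ln_div m p : 0 <= m -> 0 < p -> m * ln (m / p) = xlnx m - m * ln p.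
Proof.
rewrite le_eqVlt => /predU1P[<-|m0] p0; first by rewrite /xlnx !mul0r subrr.
by rewrite ln_div ?posrE // mulrBr.
Qed.

End mixing.

Section lebesgue_itv.
Variable R : realType.
Notation mu := (@lebesgue_measure R).
Implicit Types (a b : R) (f F : R -> R).

Lemma is_derive_continuous F (t dF : R) : is_derive t 1 F dF -> {for t, continuous F}.
Proof.
move=> H; apply/differentiable_continuous; rewrite -derivable1_diffP.
exact: ex_derive.
Qed.

Lemma continuous_in_itv_within f a b : {in `[a, b], continuous f} ->
  {within `[a, b], continuous f}.
Proof. by move=> cf; apply: continuous_in_subspaceT => t /set_mem /cf. Qed.

Lemma continuous_integrable_itv f a b : {in `[a, b], continuous f} ->
  mu.-integrable `[a, b] (EFin \o f).
Proof.
move=> /continuous_in_itv_within cf.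
by apply: continuous_compact_integrable => //; exact: segment_compact.
Qed.

Lemma Rintegral_is_derive f F a b : a < b -> {in `[a, b], continuous f} ->
  (forall t, t \in `[a, b] -> is_derive t 1 F (f t)) ->
  Rintegral mu `[a, b] f = F b - F a.
Proof.
move=> ab cf dF.
have oc t : t \in `]a, b[ -> t \in `[a, b] by rewrite !in_itv /= => /andP[/ltW-> /ltW->].
have cF t : t \in `[a, b] -> {for t, continuous F} by move/dF/is_derive_continuous.
rewrite /Rintegral (continuous_FTC2 (F := F) ab (continuous_in_itv_within cf)) //=.
- split.
  + by move=> t /oc /dF dFt; exact: ex_derive.
  + by apply: cvg_at_right_filter; apply: cF; rewrite in_itv /= lexx ltW.
  + by apply: cvg_at_left_filter; apply: cF; rewrite in_itv /= lexx ltW.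
- by move=> t /oc /dF dFt; rewrite derive1E derive_val.
Qed.

Lemma Rintegral_itv_reflect f a b : a <= b -> {in `[a, b], continuous f} ->
  Rintegral mu `[a, b] f = Rintegral mu `[1 - b, 1 - a] (fun s => f (1 - s)).
Proof.
move=> ab cf.
have dr (x : R) : is_derive x 1 (fun s : R => 1 - s) (-1).
  eapply is_derive_eq; first (eapply is_deriveB; [exact: is_derive_cst | exact: is_derive_id]).
  by rewrite sub0r.
have dr1 : derive1 (fun s : R => 1 - s) = cst (-1).
  by apply/funext => x; rewrite derive1E derive_val.
rewrite /Rintegral.
have := @integration_by_substitution_decreasing R (fun s => 1 - s) f (1 - b) (1 - a).
rewrite dr1 !subKr => ->.
- congr fine; apply: eq_integral => x _; congr (EFin _).
  by rewrite !fctE opprK mulr1.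
- by lra.
- by move=> x y _ _ xy; lra.
- by move=> x _; exact: cvg_cst.
- exact: is_cvg_cst.
- exact: is_cvg_cst.
- split.
  + by move=> x _; have dx := dr x; exact: ex_derive.
  + by apply: cvg_at_right_filter; exact: is_derive_continuous (dr _).
  + by apply: cvg_at_left_filter; exact: is_derive_continuous (dr _).
- exact: continuous_in_itv_within.
Qed.
End lebesgue_itv.

Section Rintegral_lincomb.
Context d (T : measurableType d) (R : realType) (mu : {measure set T -> \bar R}).
Variables (D : set T) (mD : measurable D).

Lemma integrable_lincomb (I : Type) (s : seq I) (c : I -> R) (f : I -> T -> R) :
  (forall i, mu.-integrable D (EFin \o f i)) ->
  mu.-integrable D (EFin \o (fun x => \sum_(i <- s) c i * f i x)).
Proof.
move=> intf; apply: (eq_integrable mD (fun x => (\sum_(i <- s) (c i)%:E * (f i x)%:E)%E)).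
  by move=> x _; under eq_bigr do rewrite -EFinM; rewrite sumEFin.
apply: (@integrable_sum _ _ _ mu D mD _ s xpredT (fun i x => (c i)%:E * (f i x)%:E)%E).
by move=> i _; exact: (integrableZl _ _ (intf i)).
Qed.

Lemma Rintegral_lincomb (I : Type) (s : seq I) (c : I -> R) (f : I -> T -> R) :
  (forall i, mu.-integrable D (EFin \o f i)) ->
  Rintegral mu D (fun x => \sum_(i <- s) c i * f i x) =
  \sum_(i <- s) c i * Rintegral mu D (f i).
Proof.
move=> intf; elim: s => [|i s IH].
  by under eq_Rintegral do rewrite big_nil; rewrite Rintegral_cst // mul0r big_nil.
under eq_Rintegral do rewrite big_cons.
rewrite RintegralD ?IH ?big_cons ?RintegralZl //; last exact: integrable_lincomb.
apply: (eq_integrable mD (fun x => (c i)%:E * (f i x)%:E)%E).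
  by move=> x _; rewrite /= EFinM.
exact: (integrableZl mD _ (intf i)).
Qed.

End Rintegral_lincomb.

Section green_function.
Variable R : realType.
Notation mu := (@lebesgue_measure R).
Implicit Types (a p q t : R) (k phi psi : R -> R).

Lemma is_derive_mixr p q t : is_derive t 1 (mixr p q) (p - q).
Proof.
rewrite /mixr; eapply is_derive_eq.
  eapply is_deriveD.
    eapply is_deriveM; [exact: is_derive_id | exact: is_derive_cst].
  eapply is_deriveM; [|exact: is_derive_cst].
  eapply is_deriveB; [exact: is_derive_cst | exact: is_derive_id].
by rewrite /= /GRing.scale /=; ring.
Qed.

Lemma is_derive_mixr_antiderivative p q t : 0 < mixr p q t ->
  is_derive t 1 (fun s => (p - q) * s - q * ln (mixr p q s))
    ((p - q) - (p - q) * q / mixr p q t).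
Proof.
move=> m0; eapply is_derive_eq.
  eapply is_deriveB.
    eapply is_deriveM; [exact: is_derive_cst | exact: is_derive_id].
  eapply is_deriveM; [exact: is_derive_cst|].
  exact: is_derive1_comp (is_derive1_ln m0) (is_derive_mixr p q t).
by rewrite /= /GRing.scale /=; field; rewrite gt_eqF.
Qed.

Lemma id_mul_le_mixr p q t kt : 0 <= p -> 0 <= q -> 0 <= t < 1 ->
  (0 < t -> kt <= (p - q) ^+ 2 / mixr p q t) ->
  t * kt <= (p - q) - (p - q) * q / mixr p q t.
Proof.
move=> p0 q0 /andP[+ t1]; rewrite le_eqVlt => /predU1P[<- _|t0 hk].
  rewrite mul0r mixr0.
  have [->|qn0] := eqVneq q 0; first by rewrite mulr0 mul0r !subr0.
  by rewrite mulfK // subrr.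
apply: le_trans (ler_wpM2l (ltW t0) (hk t0)) _.
have [m0|mn0] := eqVneq (mixr p q t) 0.
  by rewrite (mixr_eq0 p0 q0 _ m0) ?t0 // !(subrr, expr0n, mul0r, mulr0).
rewrite le_eqVlt; apply/orP; left; apply/eqP.
by move: mn0; rewrite /mixr => mn0; field.
Qed.

(* [(p - q) s - q ln m_s] is an antiderivative of [s (p - q)^2 / m_s]; the case
   [q = 0], where [m_0 = 0], is done separately. *)
Lemma Rintegral_id_mul_le p q a k : 0 <= p -> 0 <= q -> 0 < a < 1 ->
  {in `[0, 1], continuous k} ->
  {in `]0, 1[, forall t, k t <= (p - q) ^+ 2 / mixr p q t} ->
  Rintegral mu `[0, a] (fun t => t * k t) <= (p - q) * a - q * ln (mixr p q a) + q * ln q.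
Proof.
move=> p0 q0 /andP[a0 a1] ck hk.
have a01 t : t \in `[0, a] -> 0 <= t < 1.
  by rewrite in_itv /= => /andP[-> ta]; rewrite (le_lt_trans ta a1).
have le_h t : t \in `[0, a] -> t * k t <= (p - q) - (p - q) * q / mixr p q t.
  move=> ta; have /andP[_ t1] := a01 t ta.
  by apply: id_mul_le_mixr => // [|t0]; [exact: a01 | apply: hk; rewrite in_itv /= t0].
have ik : mu.-integrable `[0, a] (EFin \o (fun t => t * k t)).
  apply: continuous_integrable_itv => t ta; have /andP[t0 t1] := a01 t ta.
  have kt : {for t, continuous k} by apply: ck; rewrite in_itv /= t0 ltW.
  continuous_arith.
have [q00|qn0] := eqVneq q 0.
  subst q; have le_p t : t \in `[0, a] -> t * k t <= p.
    by move/le_h; rewrite !(mulr0, mul0r, subr0).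
  apply: le_trans (le_Rintegral _ ik _ le_p) _ => //.
    by apply: continuous_integrable_itv => t _; exact: cvg_cst.
  have dp t : is_derive t 1 ( *%R p) p.
    by eapply is_derive_eq; [exact: is_deriveM | rewrite /= /GRing.scale /=; ring].
  rewrite (Rintegral_is_derive (f := cst p) (F := *%R p) a0).
  - by rewrite !(mul0r, mulr0, subr0, addr0).
  - by move=> t _; exact: cvg_cst.
have mpos t : 0 <= t < 1 -> 0 < mixr p q t by apply: mixr_gt0; rewrite // lt_neqAle eq_sym qn0.
have F'h t : t \in `[0, a] -> is_derive t 1 (fun s => (p - q) * s - q * ln (mixr p q s))
    ((p - q) - (p - q) * q / mixr p q t).
  by move/a01/mpos; exact: is_derive_mixr_antiderivative.
have ch : {in `[0, a], continuous (fun t => (p - q) - (p - q) * q / mixr p q t)}.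
  move=> t /a01/mpos mt; continuous_arith.
  apply: continuousV; first by rewrite gt_eqF.
  exact: is_derive_continuous (is_derive_mixr p q t).
apply: le_trans (le_Rintegral _ ik _ le_h) _ => //; first exact: continuous_integrable_itv.
by rewrite (Rintegral_is_derive a0 ch F'h) mixr0 mulr0 sub0r opprK.
Qed.

Lemma continuous_lincomb (I : Type) (s : seq I) (c : I -> R) (e : I -> R -> R) t :
  (forall i, {for t, continuous (e i)}) ->
  {for t, continuous (fun x => \sum_(i <- s) c i * e i x)}.
Proof.
move=> ce; elim: s => [|i s IH].
  rewrite (_ : (fun x => _) = cst 0); first exact: cvg_cst.
  by apply/funext => x; rewrite big_nil.
rewrite (_ : (fun x => _) = (fun x => c i * e i x + \sum_(j <- s) c j * e j x)).
  by have cei := ce i; continuous_arith.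
by apply/funext => x; rewrite big_cons.
Qed.

(* [green_int a phi] is [\int_0^1 G(a,t) phi(t) dt] for the Green function
   [G(a,t) = min(a,t) (1 - max(a,t))] of [d^2/dt^2] on [0,1]; hence
   [(1 - a) f 0 + a f 1 - f a = green_int a f''] for smooth [f]. *)
Definition green_int a phi : R :=
  (1 - a) * Rintegral mu `[0, a] (fun t => t * phi t)
  + a * Rintegral mu `[a, 1] (fun t => (1 - t) * phi t).

Lemma green_integrable a phi : 0 <= a <= 1 -> {in `[0, 1], continuous phi} ->
  mu.-integrable `[0, a] (EFin \o (fun t => t * phi t)) /\
  mu.-integrable `[a, 1] (EFin \o (fun t => (1 - t) * phi t)).
Proof.
move=> /andP[a0 a1] cphi; split; apply: continuous_integrable_itv => t.
  rewrite in_itv /= => /andP[t0 ta].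
  have ct : {for t, continuous phi} by apply: cphi; rewrite in_itv /= t0 (le_trans ta).
  continuous_arith.
rewrite in_itv /= => /andP[ta t1].
have ct : {for t, continuous phi} by apply: cphi; rewrite in_itv /= t1 (le_trans a0).
continuous_arith.
Qed.

Lemma green_int_le a phi psi : 0 <= a <= 1 ->
  {in `[0, 1], continuous phi} -> {in `[0, 1], continuous psi} ->
  {in `[0, 1], forall t, phi t <= psi t} -> green_int a phi <= green_int a psi.
Proof.
move=> a01 cphi cpsi le_phi; have /andP[a0 a1] := a01.
have [iphi0 iphi1] := green_integrable a01 cphi.
have [ipsi0 ipsi1] := green_integrable a01 cpsi.
apply: lerD; apply: ler_wpM2l; rewrite ?subr_ge0 //; apply: le_Rintegral => // t.
  rewrite /= in_itv /= => /andP[t0 ta]; rewrite ler_wpM2l // le_phi //.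
  by rewrite in_itv /= t0 (le_trans ta).
rewrite /= in_itv /= => /andP[ta t1]; rewrite ler_wpM2l ?subr_ge0 // le_phi //.
by rewrite in_itv /= t1 (le_trans a0).
Qed.

Lemma green_int_sum a (I : Type) (s : seq I) (c : I -> R) (e : I -> R -> R) :
  0 <= a <= 1 -> (forall i, {in `[0, 1], continuous (e i)}) ->
  green_int a (fun t => \sum_(i <- s) c i * e i t) = \sum_(i <- s) c i * green_int a (e i).
Proof.
move=> a01 ce; rewrite /green_int.
under eq_Rintegral do rewrite mulr_sumr; under [in X in _ + X]eq_Rintegral do rewrite mulr_sumr.
under eq_Rintegral do under eq_bigr do rewrite mulrCA.
under [in X in _ + X]eq_Rintegral do under eq_bigr do rewrite mulrCA.
rewrite !Rintegral_lincomb //; try by move=> i; have [] := green_integrable a01 (ce i).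
by rewrite !mulr_sumr -big_split; apply: eq_bigr => i _ /=; ring.
Qed.

Lemma green_int_le_xlnx_gap p q a k : 0 <= p -> 0 <= q -> 0 < a < 1 ->
  {in `[0, 1], continuous k} ->
  {in `]0, 1[, forall t, k t <= (p - q) ^+ 2 / mixr p q t} ->
  green_int a k <= xlnx_gap p q a.
Proof.
move=> p0 q0 a01 ck hk; have /andP[a0 a1] := a01.
have a01' : 0 < 1 - a < 1 by rewrite subr_gt0 a1 ltrBlDr ltrDl.
(* [t |-> 1 - t] swaps [p] and [q] and maps the integral over [[a, 1]] to one over
   [[0, 1 - a]]. *)
have right : Rintegral mu `[a, 1] (fun t => (1 - t) * k t)
    <= (q - p) * (1 - a) - p * ln (mixr q p (1 - a)) + p * ln p.
  rewrite Rintegral_itv_reflect ?(ltW a1) //; last first.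
    move=> t; rewrite in_itv /= => /andP[ta t1].
    have ct : {for t, continuous k} by apply: ck; rewrite in_itv /= t1 (le_trans (ltW a0)).
    continuous_arith.
  rewrite subrr; under eq_Rintegral do rewrite subKr.
  apply: Rintegral_id_mul_le => // [s s01|s].
    apply: continuous_comp; first by continuous_arith.
    by apply: ck; move: s01; rewrite !in_itv /= => /andP[s0 s1]; apply/andP; lra.
  rewrite in_itv /= => /andP[s0 s1].
  rewrite -mixr1B -sqrrN opprB; apply: hk; rewrite in_itv /=; apply/andP; lra.
have -> : xlnx_gap p q a =
    (1 - a) * ((p - q) * a - q * ln (mixr p q a) + q * ln q)
    + a * ((q - p) * (1 - a) - p * ln (mixr q p (1 - a)) + p * ln p).
  by rewrite mixr1B /xlnx_gap /xlnx /mixr; ring.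
apply: lerD; apply: ler_wpM2l; rewrite ?subr_ge0 ?(ltW a0) ?(ltW a1) //.
exact: Rintegral_id_mul_le.
Qed.

Lemma LB_green_int a eps Delta :
  LB a eps Delta = a * Delta + green_int a (fun t => (t * (1 - t) + eps)^-1).
Proof. by rewrite /LB /green_int -addrA [X in _ + X]addrC. Qed.

End green_function.

Section densities.
Context (R : realType) (n : nat) (mu : {measure set (n.-tuple R) -> \bar R}).
Implicit Types (q g : n.-tuple R -> R).

Lemma is_density_integrable q : is_density mu q -> mu.-integrable setT (EFin \o q).
Proof.
case=> qm q0 q1; apply/integrableP; split; first exact/measurable_EFinP.
under eq_integral do rewrite gee0_abs ?lee_fin //.
by rewrite q1 ltry.
Qed.

Lemma is_density_Rintegral q : is_density mu q -> Rintegral mu setT q = 1.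
Proof. by case=> _ _ q1; rewrite /Rintegral q1. Qed.

Lemma mul_centered_powE (p y c : R) j :
  p * (y - c) ^+ j = \sum_(i < j.+1) ((- c) ^+ i *+ 'C(j, i)) * (p * y ^+ (j - i)).
Proof.
rewrite exprDn mulr_sumr; apply: eq_bigr => i _.
by rewrite mulrnAr mulrnAl; congr (_ *+ _); ring.
Qed.

Section moments.
Variables (q g : n.-tuple R -> R) (c : R) (j : nat).
Hypothesis int_moments : forall k, (k <= j)%N ->
  mu.-integrable setT (EFin \o (fun z => q z * g z ^+ k)).

Lemma integrable_centered_moment :
  mu.-integrable setT (EFin \o (fun z => q z * (g z - c) ^+ j)).
Proof.
apply: (eq_integrable measurableT (EFin \o (fun z => \sum_(i < j.+1)
    ((- c) ^+ i *+ 'C(j, i)) * (q z * g z ^+ (j - i))))).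
  by move=> z _; rewrite /= mul_centered_powE.
by apply: integrable_lincomb => // i; apply: int_moments; exact: leq_subr.
Qed.

Lemma Rintegral_centered_moment :
  Rintegral mu setT (fun z => q z * (g z - c) ^+ j) =
  \sum_(i < j.+1) ((- c) ^+ i *+ 'C(j, i)) * Rintegral mu setT (fun z => q z * g z ^+ (j - i)).
Proof.
under eq_Rintegral do rewrite mul_centered_powE.
by apply: Rintegral_lincomb => // i; apply: int_moments; exact: leq_subr.
Qed.

End moments.

Lemma SNR_ge_inv q1 q0 g (eps : R) : 0 < eps -> ((1 / eps)%:E <= SNR mu q1 q0 g)%E ->
  expect mu q1 g - expect mu q0 g != 0 /\
  Num.max (Defs.variance mu q1 g) (Defs.variance mu q0 g)
    <= eps * (expect mu q1 g - expect mu q0 g) ^+ 2.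
Proof.
rewrite /SNR; set D := _ - _; set V := Num.max _ _ => eps0.
have ieps : 0 < 1 / eps by rewrite divr_gt0.
case: ifPn => [/eqP V0|Vn0].
  case: ifPn => [_|]; first by rewrite lee_fin leNgt ieps.
  by rewrite V0 expf_eq0 /= => D0 _; rewrite D0 mulr_ge0 ?sqr_ge0 ?ltW.
rewrite lee_fin => snr.
have Vpos : 0 < V.
  rewrite lt_neqAle eq_sym Vn0 leNgt; apply/negP => Vneg.
  by move: (lt_le_trans ieps snr); rewrite ltNge mulr_ge0_le0 ?sqr_ge0 // invr_le0 ltW.
split.
  by apply: contraTneq snr => ->; rewrite expr0n mul0r -ltNge.
move: snr; rewrite ler_pdivlMr // => /(ler_wpM2l (ltW eps0)).
by rewrite mul1r mulrA divff ?gt_eqF // mul1r.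
Qed.

End densities.

Section elbo.
Context (R : realType) (n : nat) (mu : {measure set (n.-tuple R) -> \bar R}).
Variables (pxz pz q1 q0 : n.-tuple R -> R).
Hypotheses (q1_ge0 : forall z, 0 <= q1 z) (q0_ge0 : forall z, 0 <= q0 z).
Hypothesis pz_gt0 : forall z, 0 < pz z.
Hypothesis integrable_elbo : forall s, 0 <= s <= 1 ->
  mu.-integrable setT (fun z => (mixture s q1 q0 z * ln (pxz z))%:E) /\
  mu.-integrable setT (fun z => (mixture s q1 q0 z * ln (mixture s q1 q0 z / pz z))%:E).

Let elbo_integrand s z :=
  mixture s q1 q0 z * ln (pxz z) - mixture s q1 q0 z * ln (mixture s q1 q0 z / pz z).

Let integrable_elbo_integrand s : 0 <= s <= 1 ->
  mu.-integrable setT (EFin \o elbo_integrand s).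
Proof.
move=> /integrable_elbo[iL iKL].
apply: (eq_integrable measurableT (fun z => (mixture s q1 q0 z * ln (pxz z))%:E -
  (mixture s q1 q0 z * ln (mixture s q1 q0 z / pz z))%:E)%E); last exact: integrableB.
by move=> z _; rewrite /= EFinB.
Qed.

Let ELBOE s : 0 <= s <= 1 -> ELBO mu pxz pz q1 q0 s = Rintegral mu setT (elbo_integrand s).
Proof. by move=> /integrable_elbo[iL iKL]; rewrite /ELBO /expect /KL RintegralB. Qed.

Let xlnx_gap_lincomb a : 0 <= a <= 1 ->
  (fun z => xlnx_gap (q1 z) (q0 z) a) =
  (fun z => \sum_(i < 3) [:: 1; a - 1; - a]`_i * elbo_integrand [:: a; 0; 1]`_i z).
Proof.
move=> a01; apply/funext => z; rewrite !big_ord_recr big_ord0 /= /elbo_integrand !mixtureE.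
rewrite !mul_ln_div ?mixr_ge0 ?mixr0 ?mixr1 ?lexx ?ler01 //.
by rewrite /xlnx_gap; set X := xlnx (mixr _ _ a); rewrite /mixr; ring.
Qed.

Lemma integrable_xlnx_gap a : 0 <= a <= 1 ->
  mu.-integrable setT (EFin \o (fun z => xlnx_gap (q1 z) (q0 z) a)).
Proof.
move=> a01; rewrite xlnx_gap_lincomb //; apply: integrable_lincomb => // i.
by apply: integrable_elbo_integrand; case: i => [[|[|[|]]]] //= _; rewrite ?lexx ?ler01.
Qed.

Lemma ELBO_sub_affine a : 0 <= a <= 1 ->
  ELBO mu pxz pz q1 q0 a - ELBO mu pxz pz q1 q0 0 =
  a * (ELBO mu pxz pz q1 q0 1 - ELBO mu pxz pz q1 q0 0)
  + Rintegral mu setT (fun z => xlnx_gap (q1 z) (q0 z) a).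
Proof.
move=> a01; have s01 (i : 'I_3) : 0 <= [:: a; 0; 1]`_i <= 1.
  by case: i => [[|[|[|]]]] //= _; rewrite ?lexx ?ler01.
rewrite xlnx_gap_lincomb // Rintegral_lincomb //; last by move=> i; exact/integrable_elbo_integrand.
rewrite !big_ord_recr big_ord0 /= !ELBOE ?lexx ?ler01 //; ring.
Qed.

End elbo.

Section snr_bound.
Context (R : realType) (n : nat) (mu : {measure set (n.-tuple R) -> \bar R}).
Variables (q1 q0 g : n.-tuple R -> R) (eps : R).
Hypotheses (q1_density : is_density mu q1) (q0_density : is_density mu q0).
Hypotheses (int_q1g : mu.-integrable setT (EFin \o (fun z => q1 z * g z)))
  (int_q0g : mu.-integrable setT (EFin \o (fun z => q0 z * g z)))
  (int_q1g2 : mu.-integrable setT (EFin \o (fun z => q1 z * g z ^+ 2)))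
  (int_q0g2 : mu.-integrable setT (EFin \o (fun z => q0 z * g z ^+ 2))).
Hypotheses (eps_gt0 : 0 < eps) (SNR_ge : ((1 / eps)%:E <= SNR mu q1 q0 g)%E).

Let qb (b : bool) := if b then q1 else q0.
Let D := expect mu q1 g - expect mu q0 g.
Let lam t := (t * (1 - t) + eps)^-1 / D.

(* The lower bound [2 lam (q1 - q0) (g - c) - lam^2 m_t (g - c)^2] of
   [(q1 - q0)^2 / m_t], expanded around the means of [g] under [q1] and [q0] as
   [\sum_i centered i z * coef i t] (see [kernelE]). *)
Let centered (i : bool * 'I_3) z := qb i.1 z * (g z - expect mu (qb i.1) g) ^+ i.2.
Let coef (i : bool * 'I_3) t := quad_coef (if i.1 then 1 else -1) (if i.1 then t else 1 - t)
  (lam t) (if i.1 then (1 - t) * D else - (t * D)) i.2.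

Let qb_density b : is_density mu (qb b). Proof. by case: b. Qed.

Let int_moment b k : (k <= 2)%N ->
  mu.-integrable setT (EFin \o (fun z => qb b z * g z ^+ k)).
Proof.
case: k => [_|[_|[_|//]]]; [|by case: b..].
apply: (eq_integrable measurableT (EFin \o qb b)).
  by move=> z _; rewrite /= mulr1.
exact: is_density_integrable (qb_density b).
Qed.

Let int_centered i : mu.-integrable setT (EFin \o centered i).
Proof.
case: i => b j; apply: integrable_centered_moment => k kj.
by apply: int_moment; rewrite (leq_trans kj) // -ltnS.
Qed.

Let Rintegral_centered i :
  Rintegral mu setT (centered i) = [:: 1; 0; Defs.variance mu (qb i.1) g]`_i.2.
Proof.
case: i => b [[|[|[|//]]] ?] //=.
  by under eq_Rintegral do rewrite mulr1; exact: is_density_Rintegral (qb_density b).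
rewrite Rintegral_centered_moment => [|k k1]; last by apply: int_moment; rewrite (leq_trans k1).
have mass : Rintegral mu setT (fun z => qb b z * g z ^+ 0) = 1.
  by under eq_Rintegral do rewrite expr0 mulr1; exact: is_density_Rintegral (qb_density b).
rewrite !big_ord_recr big_ord0 /= add0r expr0 expr1 !mulr1n mul1r mass.
by rewrite mulr1 /expect subrr.
Qed.

Let W_gt0 t : t \in `[0, 1] -> 0 < t * (1 - t) + eps.
Proof. by rewrite in_itv /= => /andP[t0 t1]; rewrite ltr_wpDl // mulr_ge0 // subr_ge0. Qed.

Let continuous_W_inv : {in `[0, 1], continuous (fun t : R => (t * (1 - t) + eps)^-1)}.
Proof.
move=> t /W_gt0 Wt; change {for t, continuous (fun t : R => (t * (1 - t) + eps)^-1)}.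
by apply: continuousV; [rewrite gt_eqF | continuous_arith].
Qed.

Let continuous_coef i : {in `[0, 1], continuous (coef i)}.
Proof.
move=> t /continuous_W_inv cW.
have cl : {for t, continuous lam} by rewrite /lam; continuous_arith.
case: i => -[] j.
  by apply: (continuous_quad_coef (s := fun=> 1) (w := id) (e := fun x => (1 - x) * D));
    continuous_arith.
by apply: (continuous_quad_coef (s := fun=> -1) (w := fun x => 1 - x) (e := fun x => - (x * D)));
  continuous_arith.
Qed.

Let kernelE z t : \sum_i centered i z * coef i t =
  2 * lam t * (q1 z - q0 z) * (g z - (expect mu q0 g + t * D))
  - lam t ^+ 2 * mixr (q1 z) (q0 z) t * (g z - (expect mu q0 g + t * D)) ^+ 2.
Proof.
rewrite -(pair_bigA _ (fun b j => centered (b, j) z * coef (b, j) t)) /= big_bool /=.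
by rewrite !big_ord_recr !big_ord0 /= /coef /centered /quad_coef /mixr /D /=; ring.
Qed.

Let kernel_le z t : t \in `]0, 1[ ->
  \sum_i centered i z * coef i t <= (q1 z - q0 z) ^+ 2 / mixr (q1 z) (q0 z) t.
Proof.
have [[_ q1_ge0 _] [_ q0_ge0 _]] := (q1_density, q0_density).
rewrite in_itv /= kernelE => t01; have /andP[t0 t1] := t01.
apply: quad_le_sqr_div; first by rewrite mixr_ge0 // (ltW t0) (ltW t1).
by move/(mixr_eq0 (q1_ge0 z) (q0_ge0 z) t01) => ->; rewrite subrr.
Qed.

Let kernel_mean_ge t : t \in `[0, 1] ->
  (t * (1 - t) + eps)^-1 <= \sum_i Rintegral mu setT (centered i) * coef i t.
Proof.
have [D0] := SNR_ge_inv eps_gt0 SNR_ge; rewrite ge_max => /andP[V1 V0].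
rewrite in_itv /= => t01.
suff -> : \sum_i Rintegral mu setT (centered i) * coef i t = 2 * lam t * D
    - lam t ^+ 2 * (t * (1 - t) * D ^+ 2 + t * Defs.variance mu q1 g
                    + (1 - t) * Defs.variance mu q0 g).
  exact: tangent_snr_bound.
rewrite -(pair_bigA _ (fun b j => Rintegral mu setT (centered (b, j)) * coef (b, j) t)) /=.
rewrite big_bool !big_ord_recr !big_ord0 /= !Rintegral_centered /= /coef /quad_coef /=.
by ring.
Qed.

Lemma green_int_le_Rintegral_xlnx_gap a : 0 < a < 1 ->
  mu.-integrable setT (EFin \o (fun z => xlnx_gap (q1 z) (q0 z) a)) ->
  green_int a (fun t => (t * (1 - t) + eps)^-1)
    <= Rintegral mu setT (fun z => xlnx_gap (q1 z) (q0 z) a).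
Proof.
move=> a01 igap; have a01' : 0 <= a <= 1 by case/andP: a01 => /ltW -> /ltW ->.
have [[_ q1_ge0 _] [_ q0_ge0 _]] := (q1_density, q0_density).
have ckernel (c : bool * 'I_3 -> R) :
    {in `[0, 1], continuous (fun t => \sum_i c i * coef i t)}.
  by move=> t t01; apply: continuous_lincomb => i; exact: continuous_coef.
apply: (le_trans (green_int_le a01' continuous_W_inv (ckernel _) kernel_mean_ge)).
rewrite green_int_sum //; under eq_bigr do rewrite mulrC.
rewrite -Rintegral_lincomb //; apply: le_Rintegral => //; first exact: integrable_lincomb.
move=> z _; under eq_bigr do rewrite mulrC.
rewrite -green_int_sum //; apply: green_int_le_xlnx_gap => //.
exact: kernel_le.
Qed.

End snr_bound.

Unset Implicit Arguments. Set Strict Implicit. Set Printing Implicit Defensive.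

Theorem lemma3 (R : realType) (dX dZ dU k : nat) (hdim : (dZ < dX)%N)
  (muX : {measure set (dX.-tuple R) -> \bar R}) (HmuX : is_lebesgue_measure muX)
  (muZ : {measure set (dZ.-tuple R) -> \bar R}) (HmuZ : is_lebesgue_measure muZ)
  (* fixed noise density *)
  (peps : dX.-tuple R -> R) (Hpeps : is_density muX peps)
  (* generative parameters theta = (f, T, lambda) (with A, B) *)
  (f : dZ.-tuple R -> dX.-tuple R)
  (T : 'I_dZ -> R -> 'rV[R]_k) (lam : 'I_dZ -> dU.-tuple R -> 'rV[R]_k)
  (A : dU.-tuple R -> R) (B : R -> R)
  (Hprior : forall u, is_density muZ (prior T lam A B u))
  (* inference parameters phi: encoder q(z|x) and posterior q(z|x,u) *)
  (enc : dX.-tuple R -> dZ.-tuple R -> R)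
  (post : dX.-tuple R -> dU.-tuple R -> dZ.-tuple R -> R)
  (Henc : forall x, is_density muZ (enc x))
  (Hpost : forall x u, is_density muZ (post x u))
  (* the sample *)
  (x : dX.-tuple R) (u : dU.-tuple R)
  (eps : R) (Heps : 0 < eps)
  (* finiteness of the expectations and divergences in the ELBOs *)
  (Hfin : forall a : R, 0 <= a <= 1 ->
     [/\ muZ.-integrable setT (fun z => (mixture a (enc x) (post x u) z
                                   * ln (prior T lam A B u z))%:E),
         muZ.-integrable setT (fun z => (mixture a (enc x) (post x u) z
                                   * ln (decoder peps f x z))%:E),
         muZ.-integrable setT (fun z => (mixture a (enc x) (post x u) z
                * ln (mixture a (enc x) (post x u) z / prior T lam A B u z))%:E) &
         {ae muZ, forall z, 0 < mixture a (enc x) (post x u) z ->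
                            0 < decoder peps f x z}])
  (g : dZ.-tuple R -> R) (Hgm : measurable_fun setT g)
  (* finiteness of the expectations and variances of g *)
  (Hg1 : muZ.-integrable setT (fun z => (enc x z * g z)%:E))
  (Hg0 : muZ.-integrable setT (fun z => (post x u z * g z)%:E))
  (Hg1' : muZ.-integrable setT (fun z => (enc x z * g z ^+ 2)%:E))
  (Hg0' : muZ.-integrable setT (fun z => (post x u z * g z ^+ 2)%:E))
  (Hsnr : ((1 / eps)%:E <= SNR muZ (enc x) (post x u) g)%E) :
  forall alpha : R, 0 <= alpha <= 1 ->
    ELBO muZ (decoder peps f x) (prior T lam A B u) (enc x) (post x u) alpha
    - ELBO muZ (decoder peps f x) (prior T lam A B u) (enc x) (post x u) 0
    >= LB alpha eps
         (ELBO muZ (decoder peps f x) (prior T lam A B u) (enc x) (post x u) 1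
          - ELBO muZ (decoder peps f x) (prior T lam A B u) (enc x) (post x u) 0).
Proof.
move=> a a01; have /andP[a0 a1] := a01.
have [->|an0] := eqVneq a 0.
  by rewrite /LB set_itv1 Rintegral_set1 !(mul0r, mulr0, subrr, add0r).
have [->|an1] := eqVneq a 1.
  by rewrite /LB set_itv1 Rintegral_set1 !(mul1r, mulr0, subrr, mul0r, addr0).
have a01' : 0 < a < 1 by rewrite !lt_neqAle eq_sym an0 an1 a0 a1.
have [[_ q1_ge0 _] [_ q0_ge0 _]] := (Henc x, Hpost x u).
have pz_gt0 z : 0 < prior T lam A B u z by apply: prodr_gt0 => i _; exact: expR_gt0.
have int_elbo := fun s (s01 : 0 <= s <= 1) =>
  let: And4 _ iL iKL _ := Hfin s s01 in conj iL iKL.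
rewrite (ELBO_sub_affine q1_ge0 q0_ge0 pz_gt0 int_elbo a01) LB_green_int lerD2l.
exact: (green_int_le_Rintegral_xlnx_gap (Henc x) (Hpost x u) Hg1 Hg0 Hg1' Hg0' Heps Hsnr a01'
  (integrable_xlnx_gap q1_ge0 q0_ge0 pz_gt0 int_elbo a01)).
Qed.
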